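(* Let $1<k<n$ and let $\psi:(\mathbb{Q}^{n+1})^*\to(\mathbb{Q}^{n+1})^*$ be the linear map with $\psi(x_i)=-x_{k-i}$ for $1\le i<k$, $\psi(x_k)=\sum_{j=1}^{n+1}x_j$, $\psi(x_i)=-x_{n+1-(i-k)}$ for $k<i\le n$, and $\psi(x_{n+1})=-x_{n+1}$. Then $\psi$ is a linear automorphism, the map $\ker\alpha\mapsto\ker\psi(\alpha)$ permutes the hyperplanes of $\mathcal{A}_{A_{n,k}}$, and $\psi\big(\sum_{j=1}^{n+1}x_j\big)=x_k$; in particular this permutation sends $\ker\big(\sum_{j=1}^{n+1}x_j\big)$ to $\ker x_k$.
   Context: For a finite simple graph $G=(N,E)$ with $N=\{1,\dots,n\}$ and $I\subseteq N$, $G[I]$ denotes the induced subgraph on $I$, and $H_I=\ker\big(\sum_{i\in I}x_i\big)$, where $x_1,\dots,x_n$ are the coordinate functions. The connected subgraph arrangement of $G$ is $\mathcal{A}_G=\{H_I:\emptyset\neq I\subseteq N,\ G[I]\text{ connected}\}$ over $\mathbb{Q}$. The almost path $A_{n,k}$ ($1<k<n$) has vertices $1,\dots,n+1$ and edges $\{i,i+1\}$ ($1\le i<n$) and $\{k,n+1\}$. *)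

From mathcomp Require Import all_boot all_order all_algebra.
Set Implicit Arguments. Unset Strict Implicit. Unset Printing Implicit Defensive.
Import GRing.Theory Num.Theory.
Local Open Scope ring_scope.

(* Convention: a graph on vertex set {1,...,N} is encoded on the index type
   'I_N, the ordinal a : 'I_N standing for vertex a+1.
   Linear forms on Q^N are row vectors 'rV[rat]_N (coefficients w.r.t. the
   coordinate functions x_1..x_N); points of Q^N are column vectors 'cV[rat]_N;
   a form a evaluated at a point v is a *m v (a 1x1 matrix). *)

(* Induced subgraph G[I] is connected (I assumed nonempty separately). *)
Definition induced_connected (N : nat) (g : rel 'I_N) (I : {set 'I_N}) : bool :=
  [forall x in I, forall y in I,
     connect [rel u v | [&& g u v, u \in I & v \in I]] x y].

Definition chi (N : nat) (I : {set 'I_N}) : 'rV[rat]_N := \row_j (j \in I)%:R.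

Definition same_kernel (N : nat) (a b : 'rV[rat]_N) : Prop :=
  forall v : 'cV[rat]_N, (a *m v == 0) = (b *m v == 0).

(* ker a is a hyperplane of the connected subgraph arrangement A_G. *)
Definition in_csa (N : nat) (g : rel 'I_N) (a : 'rV[rat]_N) : Prop :=
  exists I : {set 'I_N},
    [/\ I != set0, induced_connected g I & same_kernel a (chi I)].

(* Edge relation of the almost path A_{n,k} on vertices 1..n+1 (1-based). *)
Definition almost_path_edge (n k u v : nat) : bool :=
  [|| (v == u.+1) && (1 <= u < n)%N, (u == v.+1) && (1 <= v < n)%N,
      (u == k) && (v == n.+1) | (v == k) && (u == n.+1)].

Definition almost_path (n k : nat) : rel 'I_(n.+1) :=
  fun a b => almost_path_edge n k a.+1 b.+1.

(* Coefficient of x_j in psi(x_i), 1-based indices. *)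
Definition psi_coef (n k i j : nat) : rat :=
  if (1 <= i < k)%N then - (j == (k - i)%N)%:R
  else if i == k then 1
  else if (k < i <= n)%N then - (j == (n.+1 - (i - k))%N)%:R
  else if i == n.+1 then - (j == n.+1)%:R
  else 0.

(* Matrix of psi acting on row vectors of coefficients: psi(a) = a *m psi_mx.
   Row a of psi_mx is psi(x_{a+1}). *)
Definition psi_mx (n k : nat) : 'M[rat]_(n.+1) :=
  \matrix_(a, b) psi_coef n k a.+1 b.+1.

Definition coord_form (N k : nat) : 'rV[rat]_N := \row_j ((j.+1 == k)%:R).

Arguments almost_path : clear implicits.
Arguments psi_mx : clear implicits.
Arguments coord_form : clear implicits.

From mathcomp Require Import all_boot all_order all_algebra zify.
Set Implicit Arguments. Unset Strict Implicit. Unset Printing Implicit Defensive.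
Import GRing.Theory Num.Theory.
Local Open Scope ring_scope.

(* Index j stands for vertex j+1, so c = k-1 is the branch vertex of the tree
   A_{n,k}, whose arms are 0..c-1, c+1..n-1 and the leaf n.  Then psi sends x_c
   to the all-ones form and every other x_j to -x_(sigma j), where sigma reverses
   each arm; hence psi is an involution, and it suffices that psi maps
   hyperplanes of the arrangement into the arrangement.
   If a connected I avoids c, it lies in one arm, chi_I psi = -chi_(sigma I), and
   sigma I is connected because sigma preserves the edges not at c.  If c is in
   I, then chi_I psi = chi_J with J = {c} u ~(sigma I): on each arm, I is an
   interval ending at c, so its sigma-image is an interval ending at the far
   end, and its complement J is an interval ending at c again. *)

Lemma connect_homo (T : finType) (e e' : rel T) (f : T -> T) :
  {homo f : x y / e x y >-> e' x y} -> {homo f : x y / connect e x y >-> connect e' x y}.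
Proof.
move=> fe x _ /connectP[p ep ->]; elim: p x ep => //= y p IHp x /andP[/fe/connect1 exy /IHp].
exact: connect_trans.
Qed.

Section RowForms.
Variable N : nat.

Lemma same_kernel_mulmx (M : 'M[rat]_N) (a b : 'rV[rat]_N) :
  same_kernel a b -> same_kernel (a *m M) (b *m M).
Proof. by move=> ab v; rewrite -!mulmxA ab. Qed.

Lemma chi_set1 (i : 'I_N) : chi [set i] = delta_mx 0 i.
Proof. by apply/rowP => j; rewrite !mxE inE eq_sym. Qed.

End RowForms.

Section InducedSubgraph.
Variables (N : nat) (g : rel 'I_N).

Definition induced_rel (J : {set 'I_N}) : rel 'I_N :=
  [rel u v | [&& g u v, u \in J & v \in J]].

Lemma induced_connectedP (J : {set 'I_N}) :
  reflect {in J &, forall x y, connect (induced_rel J) x y} (induced_connected g J).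
Proof.
apply: (iffP forall_inP) => [conJ x y xJ yJ | conJ x xJ].
  exact: (forall_inP (conJ x xJ)).
by apply/forall_inP => y yJ; exact: conJ.
Qed.

Hypothesis g_sym : symmetric g.

Lemma induced_rel_sym (J : {set 'I_N}) : symmetric (induced_rel J).
Proof. by move=> u v; rewrite /induced_rel /= g_sym (andbC (u \in J)). Qed.

Lemma induced_connected_hub (J : {set 'I_N}) h :
  {in J, forall x, connect (induced_rel J) x h} -> induced_connected g J.
Proof.
move=> hub; apply/induced_connectedP => x y xJ yJ.
by rewrite (connect_trans (hub x xJ)) // (sym_connect_sym (induced_rel_sym J)) hub.
Qed.

End InducedSubgraph.

Section AlmostPath.
Variables n k : nat.
Hypotheses (k_gt1 : (1 < k)%N) (k_lt_n : (k < n)%N).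
Local Notation c := k.-1.
Local Notation G := (almost_path n k).

Lemma almost_pathE (u v : 'I_n.+1) :
  G u v = [|| (v == u.+1 :> nat) && (u.+1 < n)%N, (u == v.+1 :> nat) && (v.+1 < n)%N,
              (u == c :> nat) && (v == n :> nat) | (v == c :> nat) && (u == n :> nat)].
Proof. by rewrite /almost_path /almost_path_edge; lia. Qed.

Lemma almost_path_sym : symmetric G.
Proof. by move=> u v; rewrite !almost_pathE; lia. Qed.

Definition arm_reflect (a : nat) : nat :=
  if (a < c)%N then (c.-1 - a)%N else if (c < a < n)%N then (n + c - a)%N else a.

Variant arm_reflect_spec (a : nat) : nat -> Set :=
  | ArmLeft of (a < c)%N : arm_reflect_spec a (c.-1 - a)
  | ArmRight of (c < a < n)%N : arm_reflect_spec a (n + c - a)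
  | ArmFixed of a = c \/ a = n : arm_reflect_spec a a.

Lemma arm_reflectP a : (a <= n)%N -> arm_reflect_spec a (arm_reflect a).
Proof.
rewrite /arm_reflect => an; case: ifP => [left_a|not_left]; first exact: ArmLeft.
case: ifP => [right_a|not_right]; first exact: ArmRight.
by apply: ArmFixed; lia.
Qed.

Lemma arm_reflect_le a : (a <= n)%N -> (arm_reflect a <= n)%N.
Proof. by case/arm_reflectP; lia. Qed.

Lemma arm_reflectK a : (a <= n)%N -> arm_reflect (arm_reflect a) = a.
Proof.
by move=> an; case: (arm_reflectP an) (arm_reflect_le an) => h an';
  case: (arm_reflectP an'); lia.
Qed.

Definition arm_perm (j : 'I_n.+1) : 'I_n.+1 := inord (arm_reflect j).

Definition center : 'I_n.+1 := inord c.

Lemma val_center : center = c :> nat.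
Proof. by rewrite inordK //; lia. Qed.

Lemma eq_center j : (j == center) = (j == c :> nat).
Proof. by rewrite -val_eqE /= val_center. Qed.

Lemma val_arm_perm j : arm_perm j = arm_reflect j :> nat.
Proof. by rewrite inordK // ltnS; exact: arm_reflect_le (ltn_ord j). Qed.

Lemma arm_perm_inord a : (a <= n)%N -> arm_perm (inord a) = inord (arm_reflect a).
Proof. by move=> an; rewrite /arm_perm inordK. Qed.

Lemma arm_permK : involutive arm_perm.
Proof. by move=> j; apply: val_inj; rewrite /= !val_arm_perm (arm_reflectK (ltn_ord j)). Qed.

Lemma arm_perm_eq_center j : (arm_perm j == center) = (j == center).
Proof. by rewrite !eq_center val_arm_perm; case: (arm_reflectP (ltn_ord j)); lia. Qed.

Lemma arm_perm_homo (u v : 'I_n.+1) :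
  u != center -> v != center -> G u v -> G (arm_perm u) (arm_perm v).
Proof.
rewrite !eq_center !almost_pathE !val_arm_perm.
by case: (arm_reflectP (ltn_ord u)); case: (arm_reflectP (ltn_ord v)); lia.
Qed.

Lemma psi_mxE (a b : 'I_n.+1) :
  psi_mx n k a b = if a == center then 1 else - (b == arm_perm a)%:R.
Proof.
rewrite mxE /psi_coef eq_center -val_eqE /= val_arm_perm.
case: (arm_reflectP (ltn_ord a)) => side; repeat case: ifP => ?;
  first [by exfalso; lia | by congr (- (nat_of_bool _)%:R); lia | done].
Qed.

Lemma chi_mulmx_psiE (I : {set 'I_n.+1}) j :
  (chi I *m psi_mx n k) 0 j
  = (center \in I)%:R - ((j != center) && (arm_perm j \in I))%:R.
Proof.
rewrite mxE (bigD1 center) //= psi_mxE eqxx mxE mulr1; congr (_ + _).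
rewrite (eq_bigr (fun a => - ((a == arm_perm j) && (a \in I))%:R)); last first.
  move=> a /negbTE a_c; rewrite psi_mxE a_c mxE eq_sym (canF_eq arm_permK).
  by case: (_ == _); case: (_ \in _); rewrite ?mulr1 ?mulr0 ?oppr0.
rewrite sumrN big_mkcond (bigD1 (arm_perm j)) //= eqxx arm_perm_eq_center big1 ?addr0.
  by case: (j != center).
by move=> a /negbTE->; rewrite if_same.
Qed.

Lemma chi_mulmx_psi_center (I : {set 'I_n.+1}) : center \in I ->
  chi I *m psi_mx n k = chi (center |: ~: (arm_perm @^-1: I)).
Proof.
move=> cI; apply/rowP => j; rewrite chi_mulmx_psiE cI !mxE !inE.
by case: (j == center); case: (arm_perm j \in I); rewrite ?subr0 ?subrr.
Qed.

Lemma chi_mulmx_psi_nocenter (I : {set 'I_n.+1}) : center \notin I ->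
  chi I *m psi_mx n k = - chi (arm_perm @^-1: I).
Proof.
move=> cI; apply/rowP => j; rewrite chi_mulmx_psiE (negbTE cI) !mxE !inE sub0r.
case: (eqVneq j center) => [->|//].
have /eqP-> : arm_perm center == center by rewrite arm_perm_eq_center.
by rewrite (negbTE cI).
Qed.

Lemma row_psi_mx a :
  row a (psi_mx n k) = if a == center then chi setT else - chi [set arm_perm a].
Proof. by apply/rowP => b; rewrite mxE psi_mxE; case: (a == center); rewrite !mxE !inE. Qed.

Lemma chi_setT_mulmx_psi : chi setT *m psi_mx n k = chi [set center].
Proof. by rewrite chi_mulmx_psi_center ?inE // preimsetT setCT setU0. Qed.

Lemma chi_center : chi [set center] = coord_form n.+1 k.
Proof. by apply/rowP => j; rewrite !mxE inE eq_center; congr (nat_of_bool _)%:R; lia. Qed.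

Lemma psi_mxK : psi_mx n k *m psi_mx n k = 1%:M.
Proof.
apply/row_matrixP => a; rewrite row_mul row_psi_mx row1 -chi_set1.
case: eqP => [->|/eqP a_c]; first exact: chi_setT_mulmx_psi.
rewrite mulNmx chi_mulmx_psi_nocenter ?opprK; last first.
  by rewrite inE eq_sym arm_perm_eq_center.
by congr chi; apply/setP => b; rewrite !inE (inj_eq (can_inj arm_permK)).
Qed.

Lemma induced_connected_interval (I : {set 'I_n.+1}) x y z :
  induced_connected G I -> inord x \in I -> inord y \in I ->
  (x <= z <= y)%N -> (y < n)%N -> inord z \in I.
Proof.
move=> /induced_connectedP conI xI yI /andP[xz zy] yn; apply: contraT => zI.
(* Counting the leaf n as c, no edge avoiding z joins a vertex before z to one
   after it. *)
pose P := [pred v : 'I_n.+1 |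
  (v != n :> nat) && (v < z)%N || (v == n :> nat) && (c < z)%N].
have closedP : closed (induced_rel G I) P.
  move=> u v /and3P[uv uI vI].
  have uz : u != z :> nat by apply: contraNneq zI => <-; rewrite inord_val.
  have vz : v != z :> nat by apply: contraNneq zI => <-; rewrite inord_val.
  by move: uv; rewrite !inE almost_pathE /=; lia.
have x_z : x != z by apply: contraNneq zI => <-.
have := closed_connect closedP (conI _ _ xI yI).
by rewrite !inE /= !inordK; lia.
Qed.

Lemma connect_interval (J : {set 'I_n.+1}) p q :
  (p <= q)%N -> (q < n)%N -> (forall v, (p <= v <= q)%N -> inord v \in J) ->
  connect (induced_rel G J) (inord p) (inord q).
Proof.
elim: q => [|q IHq] pq qn inJ; first by have -> : p = 0%N by lia.
have [->|pq'] : p = q.+1 \/ (p <= q)%N by lia.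
  exact: connect0.
apply: connect_trans (IHq pq' _ _) (connect1 _); first lia.
  by move=> v pvq; apply: inJ; lia.
by rewrite /induced_rel /= !inJ ?andbT ?almost_pathE ?inordK; lia.
Qed.

Lemma arm_perm_between (I : {set 'I_n.+1}) (j : 'I_n.+1) v :
  induced_connected G I -> center \in I -> (j <= v < c)%N || (c < v <= j)%N -> (j < n)%N ->
  arm_perm (inord v) \in I -> arm_perm j \in I.
Proof.
move=> conI cI jv jn; have vn : (v <= n)%N by lia.
rewrite arm_perm_inord // /arm_perm.
case: (arm_reflectP (ltn_ord j)) => sj; case: (arm_reflectP vn) => sv vI;
  try by exfalso; lia.
- by apply: (induced_connected_interval conI vI cI); lia.
- by apply: (induced_connected_interval conI cI vI); lia.
Qed.

Lemma connected_psi_center (I : {set 'I_n.+1}) :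
  induced_connected G I -> center \in I ->
  induced_connected G (center |: ~: (arm_perm @^-1: I)).
Proof.
move=> conI cI; set J := _ |: _.
have JE j : (j \in J) = (j == center) || (arm_perm j \notin I) by rewrite !inE.
apply: (@induced_connected_hub _ _ almost_path_sym _ center) => j.
rewrite JE; case: (eqVneq j center) => [-> _ | j_c /= jI]; first exact: connect0.
have inJ v : (j <= v <= c)%N || (c <= v <= j)%N -> (j < n)%N -> inord v \in J.
  move=> jv jn; rewrite JE eq_center inordK; last lia.
  case: eqP => //= v_c; apply: contra jI; apply: arm_perm_between => //; lia.
have [j_left | [j_right | j_n]] : (j < c)%N \/ (c < j < n)%N \/ j = n :> nat.
- by move: (ltn_ord j) j_c; rewrite eq_center; lia.
- rewrite -(inord_val j) /center; apply: connect_interval => [||v jvc]; try lia.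
  by apply: inJ; lia.
- rewrite (sym_connect_sym (induced_rel_sym almost_path_sym J)) -(inord_val j) /center.
  apply: connect_interval => [||v jvc]; try lia.
  by apply: inJ; lia.
- apply: connect1; rewrite /induced_rel /= JE (negbTE j_c) jI JE eqxx andbT.
  by rewrite almost_pathE val_center; lia.
Qed.

Lemma connected_psi_nocenter (I : {set 'I_n.+1}) :
  induced_connected G I -> center \notin I -> induced_connected G (arm_perm @^-1: I).
Proof.
move=> /induced_connectedP conI cI; apply/induced_connectedP => x y; rewrite !inE => xI yI.
rewrite -(arm_permK x) -(arm_permK y); apply: connect_homo (conI _ _ xI yI).
move=> u v /and3P[uv uI vI].
have off_center w : w \in I -> w != center by apply: contraTneq => ->.
by rewrite /induced_rel /= !inE !arm_permK uI vI arm_perm_homo ?off_center.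
Qed.

Lemma in_csa_mulmx_psi (a : 'rV[rat]_n.+1) : in_csa G a -> in_csa G (a *m psi_mx n k).
Proof.
case=> I [I0 conI aI]; have aIpsi := same_kernel_mulmx (psi_mx n k) aI.
have [cI | cI] := boolP (center \in I).
- exists (center |: ~: (arm_perm @^-1: I)); split.
  + by apply/set0Pn; exists center; rewrite !inE eqxx.
  + exact: connected_psi_center.
  + by move=> v; rewrite aIpsi chi_mulmx_psi_center.
- exists (arm_perm @^-1: I); split.
  + by case/set0Pn: I0 => x xI; apply/set0Pn; exists (arm_perm x); rewrite inE arm_permK.
  + exact: connected_psi_nocenter.
  + by move=> v; rewrite aIpsi chi_mulmx_psi_nocenter // mulNmx oppr_eq0.
Qed.

End AlmostPath.

Theorem proposition5p3 (n k : nat) (hk1 : (1 < k)%N) (hkn : (k < n)%N) :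
  let psi := psi_mx n k in
  let G := almost_path n k in
  psi \in unitmx /\
  (forall a, in_csa G a -> in_csa G (a *m psi)) /\
  (forall a b, in_csa G a -> in_csa G b ->
     same_kernel (a *m psi) (b *m psi) -> same_kernel a b) /\
  (forall b, in_csa G b -> exists a, in_csa G a /\ same_kernel (a *m psi) b) /\
  chi [set: 'I_(n.+1)] *m psi = coord_form (n.+1) k /\
  same_kernel (chi [set: 'I_(n.+1)] *m psi) (coord_form (n.+1) k).
Proof.
move=> psi G.
have psiK : psi *m psi = 1%:M := psi_mxK hk1 hkn.
have mulmx_psiK (a : 'rV_n.+1) : a *m psi *m psi = a by rewrite -mulmxA psiK mulmx1.
have chi_setT_psi : chi setT *m psi = coord_form n.+1 k.
  by rewrite chi_setT_mulmx_psi // chi_center.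
split; first by case: (mulmx1_unit psiK).
split; first exact: in_csa_mulmx_psi.
split.
  by move=> a b _ _ /(same_kernel_mulmx psi); rewrite !mulmx_psiK.
split.
  by move=> b /(in_csa_mulmx_psi hk1 hkn) b_psi; exists (b *m psi); rewrite mulmx_psiK.
by rewrite chi_setT_psi.
Qed.
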